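(* Under the standing assumptions, let $\vec v$ be a demand vector with at least four non-zero entries, and let $t$ be a task of type 2 with respect to $\vec v$ with intermediate task $i$. Then task $i$ is of type 1 with respect to $\vec v$.
   Context: Standing assumptions: $n\ge 4$, $k\ge 5$, and $f_1,\dots,f_n$ are functions from demand vectors to $[k]$ satisfying the demand (for every demand vector $\vec v$ and task $j$, exactly $v_j$ agents $a$ have $f_a(\vec v)=j$), with maximum switching cost at most $2$. A demand vector is $\vec v=(v_1,\dots,v_k)$ of non-negative integers with $\sum v_j=n$; task $j$ is non-empty in $\vec v$ if $v_j\ge1$. The switching cost of $(\vec v,\vec v')$ is the number of agents $a$ with $f_a(\vec v)\ne f_a(\vec v')$; $\vec v,\vec v'$ are adjacent if $\|\vec v-\vec v'\|_1=2$. An ordered pair $(\vec v_1,\vec v_2)$ is $(s,t)$-adjacent if $s\ne t$ and $\vec v_2$ is obtained from $\vec v_1$ by moving one unit of demand from task $s$ to task $t$. Agent $a$ is $(i,j)$-mobile with respect to $(\vec v_1,\vec v_2)$ if $f_a(\vec v_1)=i$, $f_a(\vec v_2)=j$, $i\ne j$. If $(\vec v_1,\vec v_2)$ is $(s,t)$-adjacent with switching cost $2$, then there is a task $i\notin\{s,t\}$ such that one switching agent is $(s,i)$-mobile and the other is $(i,t)$-mobile; $i$ is called the intermediate task of $(\vec v_1,\vec v_2)$. A task $t$ is of type 1 with respect to $\vec v$ if for every task $s\ne t$ non-empty in $\vec v$, the $(s,t)$-adjacent pair starting at $\vec v$ has switching cost $1$. A task $t$ is of type 2 with respect to $\vec v$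 if there exist a task $i$ and an agent $a$ such that for every task $s\notin\{i,t\}$ non-empty in $\vec v$, the $(s,t)$-adjacent pair starting at $\vec v$ has switching cost $2$, intermediate task $i$, and $(i,t)$-mobile agent $a$; then $i$ is the intermediate task of $t$ with respect to $\vec v$. *)

From mathcomp Require Import all_boot.
Set Implicit Arguments. Unset Strict Implicit. Unset Printing Implicit Defensive.

(* Tasks are 'I_k, agents are 'I_n, demand vectors are {ffun 'I_k -> nat}. *)
Definition dvec (k : nat) := {ffun 'I_k -> nat}.

Definition is_demand (n k : nat) (v : dvec k) : Prop := \sum_(j < k) v j = n.

(* an assignment: f a v is the task of agent a in demand vector v *)
Definition assignment (n k : nat) := 'I_n -> dvec k -> 'I_k.

Definition satisfies_demand n k (f : assignment n k) : Prop :=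
  forall v : dvec k, is_demand n v ->
    forall j : 'I_k, #|[set a : 'I_n | f a v == j]| = v j.

Definition switching_cost n k (f : assignment n k) (v v' : dvec k) : nat :=
  #|[set a : 'I_n | f a v != f a v']|.

Definition adjacent k (v v' : dvec k) : Prop :=
  \sum_(j < k) ((v j - v' j) + (v' j - v j)) = 2.

Definition max_cost_le2 n k (f : assignment n k) : Prop :=
  forall v v' : dvec k, is_demand n v -> is_demand n v' -> adjacent v v' ->
    switching_cost f v v' <= 2.

Definition move k (v : dvec k) (s t : 'I_k) : dvec k :=
  [ffun j => if j == s then (v j).-1 else if j == t then (v j).+1 else v j].

Definition nonempty k (v : dvec k) (j : 'I_k) : bool := 0 < v j.

Definition mobile n k (f : assignment n k) (a : 'I_n) (v1 v2 : dvec k) (i j : 'I_k) : Prop :=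
  f a v1 = i /\ f a v2 = j /\ i <> j.

Definition intermediate n k (f : assignment n k) (v1 v2 : dvec k) (s t i : 'I_k) : Prop :=
  i <> s /\ i <> t /\
  exists a b : 'I_n, mobile f a v1 v2 s i /\ mobile f b v1 v2 i t.

Definition type1 n k (f : assignment n k) (v : dvec k) (t : 'I_k) : Prop :=
  forall s : 'I_k, s <> t -> nonempty v s -> switching_cost f v (move v s t) = 1.

Definition type2_with n k (f : assignment n k) (v : dvec k) (t i : 'I_k) (a : 'I_n) : Prop :=
  forall s : 'I_k, s <> i -> s <> t -> nonempty v s ->
    [/\ switching_cost f v (move v s t) = 2,
        intermediate f v (move v s t) s t i &
        mobile f a v (move v s t) i t].

Definition type2 n k (f : assignment n k) (v : dvec k) (t : 'I_k) : Prop :=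
  exists (i : 'I_k) (a : 'I_n), type2_with f v t i a.

(* The proof rests on a conservation law: when f satisfies the demand and v
   is changed into w, every task gains among the switching agents exactly the
   demand it gains from v to w.  For an (s,t)-move this forces a switching
   cost 1 move to be done by a single (s,t)-mobile agent, and a switching cost
   2 move to be done by an (s,m)-mobile and an (m,t)-mobile agent.  Since
   adjacent demand vectors have at most two switching agents, exhibiting three
   agents that switch between two adjacent vectors is a contradiction.

   We then show that every move s -> i from v costs 1: first for s <> t, by
   comparing the moves s -> t and s -> i (the agents a, x of the type-2
   witness and the (m,i)-mobile agent of a costly move s -> i all switch), and
   then for s = t, by comparing the moves t -> i and s' -> i for a fourth
   non-empty task s' outside {i, t, m}. *)

From mathcomp Require Import all_boot zify.

Set Implicit Arguments.
Unset Strict Implicit.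
Unset Printing Implicit Defensive.

(* A set with at least four elements has an element avoiding any three given
   points; this is where the four non-empty tasks are used. *)
Lemma avoid_three (T : finType) (A : {set T}) (p q r : T) :
  3 < #|A| -> exists2 s, s \in A & [/\ s != p, s != q & s != r].
Proof.
move=> A_gt3; set B := [set p; q; r].
have B_le3 : #|B| <= 3 by rewrite !cardsU !cards1; lia.
have : 0 < #|A :\: B|.
  by rewrite cardsD; have := subset_leq_card (subsetIr A B); lia.
case/card_gt0P=> s; rewrite !inE !negb_or -!andbA => /and4P [sp sq sr sA].
by exists s.
Qed.

Lemma card_setI_sum (T : finType) (P : pred T) (D : {set T}) :
  #|[set a | P a] :&: D| = \sum_(a in D) P a.
Proof.
rewrite -sum1_card big_mkcond [RHS]big_mkcond /=; apply: eq_bigr => a _.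
by rewrite !inE; case: (a \in D); case: (P a).
Qed.

Ltac split_eqs := repeat (match goal with
  | |- context [?a == ?a] => rewrite eqxx
  | |- context [?a == ?b] => case: (eqVneq a b) => [?|?]; [subst|]
  end).

Lemma two_token_shapes (T : eqType) (s t xa xb za zb : T) :
  s != t -> xa != xb -> za != zb ->
  (forall j, (xa == j) + (za == j) + (j == t) = (xb == j) + (zb == j) + (j == s)) ->
  (xa = s /\ zb = t /\ xb = za) \/ (za = s /\ xb = t /\ zb = xa).
Proof.
move=> st xab zab E.
move: (E s) (E t) (E xb) (E zb) (E za) (E xa) st xab zab; clear E.
split_eqs; by [|left|right].
Qed.

Section Moves.
Variable k : nat.
Implicit Types (v u w : dvec k) (s t i p q : 'I_k).

Lemma move_demand n v s t : is_demand n v -> s != t -> 0 < v s ->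
  is_demand n (move v s t).
Proof.
rewrite /is_demand => Hv st vs.
rewrite (bigD1 s) //= (bigD1 t) 1?eq_sym //= !ffunE eqxx (eq_sym t s) (negbTE st) eqxx.
rewrite (eq_bigr (fun j => v j)); last first.
  by move=> j /andP [js jt]; rewrite ffunE (negbTE js) (negbTE jt).
move: Hv; rewrite (bigD1 s) //= (bigD1 t) 1?eq_sym //=.
lia.
Qed.

Lemma move_balance v s t : s != t -> 0 < v s ->
  forall j, move v s t j + (j == s) = v j + (j == t).
Proof.
move=> st vs j; rewrite ffunE.
case: (eqVneq j s) => [->|js]; first by rewrite (negbTE st); lia.
by case: (eqVneq j t) => [->|jt] /=; lia.
Qed.

Lemma adjacent_shift u w p q : p != q -> u p = (w p).+1 -> w q = (u q).+1 ->
  (forall j, j != p -> j != q -> u j = w j) -> adjacent u w.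
Proof.
rewrite /adjacent => pq Hp Hq Ho.
rewrite (bigD1 p) //= (bigD1 q) 1?eq_sym //= big1; last first.
  by move=> j /andP [jp jq]; rewrite Ho // subnn.
lia.
Qed.

Ltac case_ifs := rewrite ?ffunE; repeat (case: eqP => [?|?]); subst; try congruence.

Lemma adjacent_move v s t : s != t -> 0 < v s -> adjacent v (move v s t).
Proof.
move=> st vs; apply: (adjacent_shift st).
- by rewrite ffunE eqxx prednK.
- by rewrite ffunE (eq_sym t s) (negbTE st) eqxx.
- by move=> j js jt; rewrite ffunE (negbTE js) (negbTE jt).
Qed.

Lemma adjacent_retarget v s t i : s != t -> s != i -> t != i ->
  adjacent (move v s t) (move v s i).
Proof.
move=> /eqP st /eqP si /eqP ti; apply: (@adjacent_shift _ _ t i); first exact/eqP.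
all: try move=> j /eqP jt /eqP ji; case_ifs.
Qed.

Lemma adjacent_resource v s t i : s != t -> s != i -> t != i -> 0 < v s -> 0 < v t ->
  adjacent (move v s i) (move v t i).
Proof.
move=> /eqP st /eqP si /eqP ti vs vt; apply: (@adjacent_shift _ _ t s).
  by apply/eqP => ts; apply: st.
all: try move=> j /eqP jt /eqP js; case_ifs; rewrite ?prednK //.
Qed.

End Moves.

Section Assignment.
Variables (n k : nat) (f : assignment n k).
Hypothesis demand_f : satisfies_demand f.
Implicit Types (v w : dvec k) (s t i m : 'I_k) (a b x y z : 'I_n).

Definition switchers v w := [set a | f a v != f a w].

Lemma agents_differ v x y : f x v != f y v -> x != y.
Proof. by apply: contraNneq => ->. Qed.

Lemma switch_balance v w : is_demand n v -> is_demand n w -> forall j,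
  \sum_(a in switchers v w) (f a v == j) + w j =
  \sum_(a in switchers v w) (f a w == j) + v j.
Proof.
move=> Hv Hw j; rewrite -!card_setI_sum.
rewrite -{1}(demand_f Hw j) -(demand_f Hv j).
rewrite -(cardsID (switchers v w) [set a | f a w == j]).
rewrite -(cardsID (switchers v w) [set a | f a v == j]).
have -> : [set a | f a v == j] :\: switchers v w = [set a | f a w == j] :\: switchers v w.
  by apply/setP => a; rewrite !inE negbK; case: (eqVneq (f a v) (f a w)) => [->|].
lia.
Qed.

Lemma move_flow v s t : is_demand n v -> s != t -> 0 < v s -> forall j,
  \sum_(a in switchers v (move v s t)) (f a v == j) + (j == t) =
  \sum_(a in switchers v (move v s t)) (f a (move v s t) == j) + (j == s).
Proof.
move=> Hv st vs j.
have := switch_balance Hv (move_demand Hv st vs) j.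
have := move_balance st vs j.
move: (j == s) (j == t) => [] []; lia.
Qed.

Lemma move_cost1 v s t : is_demand n v -> s != t -> 0 < v s ->
  switching_cost f v (move v s t) = 1 ->
  exists z, mobile f z v (move v s t) s t /\
            forall b, b != z -> f b (move v s t) = f b v.
Proof.
move=> Hv st vs /eqP/cards1P [z Dz].
have flow := move_flow Hv st vs; rewrite /switchers Dz in flow.
move: (flow s) (flow t); rewrite !big_set1 !eqxx (eq_sym t s) (negbTE st).
move=> flow_s flow_t; exists z; split; first split; [|split|].
- by apply/eqP; move: flow_s; case: (f z v == s); case: (_ == s).
- by apply/eqP; move: flow_t; case: (f z (move v s t) == t); case: (f z v == t).
- exact/eqP.
- move=> b bz; apply: contraNeq bz => b_sw.
  by rewrite -in_set1 -Dz inE eq_sym.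
Qed.

Lemma move_cost2 v s t : is_demand n v -> s != t -> 0 < v s ->
  switching_cost f v (move v s t) = 2 ->
  exists x y m, [/\ mobile f x v (move v s t) s m, mobile f y v (move v s t) m t &
                    forall b, b != x -> b != y -> f b (move v s t) = f b v].
Proof.
move=> Hv st vs /eqP/cards2P [x [y [xy Dxy]]]; set w := move v s t in Dxy *.
have stay b : b != x -> b != y -> f b w = f b v.
  move=> bx b_y; apply: contraNeq bx => b_sw.
  have : b \in [set x; y] by rewrite -Dxy inE eq_sym.
  by rewrite !inE (negbTE b_y) orbF.
have x_sw : f x v != f x w by move: (set21 x y); rewrite -Dxy inE.
have y_sw : f y v != f y w by move: (set22 x y); rewrite -Dxy inE.
have flow j : (f x v == j) + (f y v == j) + (j == t) =
              (f x w == j) + (f y w == j) + (j == s).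
  have := move_flow Hv st vs j; rewrite -/w /switchers Dxy.
  by rewrite !big_setU1 ?in_set1 // !big_set1.
case: (two_token_shapes st x_sw y_sw flow) => [[xs [yt xy_m]] | [ys [xt yx_m]]].
- exists x, y, (f y v); split=> //.
  + by do 2?split=> //; rewrite -xs -xy_m; exact/eqP.
  + by do 2?split=> //; rewrite -yt; exact/eqP.
- exists y, x, (f x v); split=> [||b b_y bx]; last exact: stay.
  + by do 2?split=> //; rewrite -ys -yx_m; exact/eqP.
  + by do 2?split=> //; rewrite -xt; exact/eqP.
Qed.

Hypothesis cost_f : max_cost_le2 f.

Lemma no_three_switchers v w x y z :
  is_demand n v -> is_demand n w -> adjacent v w ->
  f x v != f x w -> f y v != f y w -> f z v != f z w ->
  x != y -> y != z -> z != x -> False.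
Proof.
move=> Hv Hw vw x_sw y_sw z_sw xy yz zx.
have := cost_f Hv Hw vw; rewrite leqNgt => /negP; apply.
by apply/card_gt2P; exists x, y, z; rewrite !inE.
Qed.

(* A move from a non-empty task costs 1 or 2: someone must leave s. *)
Lemma move_cost_1_or_2 v s t : is_demand n v -> s != t -> 0 < v s ->
  switching_cost f v (move v s t) = 1 \/ switching_cost f v (move v s t) = 2.
Proof.
move=> Hv st vs.
have le2 := cost_f Hv (move_demand Hv st vs) (adjacent_move st vs).
suff : switching_cost f v (move v s t) != 0.
  by move: le2; case: (switching_cost _ _ _) => [|[|[|]]]; auto.
apply/negP => /eqP/cards0_eq D0.
by have := move_flow Hv st vs s; rewrite /switchers D0 !big_set0 eqxx (negbTE st).
Qed.

(* If t is of type 2 with intermediate task i, every move to i from a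
   non-empty task s outside {i, t} costs 1.  Otherwise the (m,i)-mobile agent
   y of the move s -> i, the agent a (at t after s -> t, at i after s -> i) and
   the (s,i)-mobile agent x of the move s -> t would all switch between the
   adjacent vectors move v s t and move v s i. *)
Lemma type2_move_to_intermediate v t i a : is_demand n v -> type2_with f v t i a ->
  forall s, s <> i -> s <> t -> 0 < v s -> switching_cost f v (move v s i) = 1.
Proof.
move=> Hv T2 s si' st' vs.
have [_ [_ [it [x [_ [[xv [xw _]] _]]]]] [av [aw _]]] := T2 s si' st' vs.
have si : s != i by apply/eqP.
have st : s != t by apply/eqP.
have ti : t != i by apply/eqP => ti; apply: it.
set w1 := move v s t in xw aw; set w2 := move v s i.
case: (move_cost_1_or_2 Hv si vs) => // cost2; exfalso.
have [xx [yy [m [[xxv [xxw sm]] [yyv [yyw mi]] stay2]]]] := move_cost2 Hv si vs cost2.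
rewrite -/w2 in xxw yyw stay2; move/eqP: sm => sm; move/eqP: mi => mi.
have xa : x != a by apply: (@agents_differ v); rewrite xv av.
have a_yy : a != yy by apply: (@agents_differ v); rewrite av yyv eq_sym.
have yyx : yy != x by apply: (@agents_differ v); rewrite yyv xv eq_sym.
have aw2 : f a w2 = i.
  by rewrite stay2 // (@agents_differ v) // av xxv eq_sym.
have yyw1 : f yy w1 = m.
  apply/eqP; rewrite -yyv eq_sym; apply: contraT => yy_sw; exfalso.
  have Hw1 := move_demand Hv st vs.
  apply: (no_three_switchers Hv Hw1 (adjacent_move st vs) _ _ yy_sw xa a_yy yyx).
  - by rewrite xv xw.
  - by rewrite av aw eq_sym.
have xw2 : f x w2 != i.
  case: (eqVneq x xx) => [-> | x_xx]; first by rewrite xxw.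
  by rewrite stay2 ?xv // (eq_sym x yy).
apply: (no_three_switchers (move_demand Hv st vs) (move_demand Hv si vs)
          (adjacent_retarget v st si ti) _ _ _ a_yy yyx xa).
- by rewrite aw aw2.
- by rewrite yyw1 yyw.
- by rewrite xw eq_sym.
Qed.

(* Otherwise it is done by a (t,m)-mobile agent x and an (m,i)-mobile
   agent y; a fourth non-empty task s outside {i, t, m} has, by the previous
   lemma, a single (s,i)-mobile agent z for the move s -> i, and x, y and z
   all switch between the adjacent vectors move v s i and move v t i. *)
Lemma type2_move_from_target v t i a : is_demand n v ->
  3 < #|[set j | nonempty v j]| -> type2_with f v t i a ->
  t <> i -> 0 < v t -> switching_cost f v (move v t i) = 1.
Proof.
move=> Hv v_ne T2 /eqP ti vt; set w := move v t i.
case: (move_cost_1_or_2 Hv ti vt) => // cost2; exfalso.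
have [x [y [m [[xv [xw tm]] [yv [yw mi]] stay]]]] := move_cost2 Hv ti vt cost2.
rewrite -/w in xw yw stay; move/eqP: tm => tm; move/eqP: mi => mi.
have [s s_ne [si st sm]] := avoid_three i t m v_ne.
have vs : 0 < v s by move: s_ne; rewrite inE.
have cost1 : switching_cost f v (move v s i) = 1.
  by apply: (type2_move_to_intermediate Hv T2) => //; apply/eqP.
have [z [[zv [zw _]] stay3]] := move_cost1 Hv si vs cost1.
set w3 := move v s i in zw stay3.
have zx : z != x by apply: (@agents_differ v); rewrite zv xv.
have xy : x != y by apply: (@agents_differ v); rewrite xv yv.
have yz : y != z by apply: (@agents_differ v); rewrite yv zv eq_sym.
have z_stays : f z w = s by rewrite stay ?zv // eq_sym yz.
have xw3 : f x w3 = t by rewrite stay3 ?xv // eq_sym.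
have yw3 : f y w3 = m by rewrite stay3 ?yv.
apply: (no_three_switchers (move_demand Hv si vs) (move_demand Hv ti vt)
          (adjacent_resource st si ti vs vt) _ _ _ zx xy yz).
- by rewrite zw z_stays eq_sym.
- by rewrite xw3 xw.
- by rewrite yw3 yw.
Qed.

End Assignment.

(* Every move to i from a non-empty task costs 1: for s = t by
   type2_move_from_target, otherwise by type2_move_to_intermediate. *)
Theorem lemma4p4 (n k : nat) (f : assignment n k) :
  4 <= n -> 5 <= k ->
  satisfies_demand f -> max_cost_le2 f ->
  forall (v : dvec k), is_demand n v ->
  4 <= #|[set j : 'I_k | nonempty v j]| ->
  forall (t i : 'I_k) (a : 'I_n), type2_with f v t i a ->
  type1 f v i.
Proof.
move=> _ _ demand_f cost_f v Hv v_ne t i a T2 s.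
case: (eqVneq s t) => [-> | /eqP st] si vs.
- exact: (type2_move_from_target demand_f cost_f Hv v_ne T2 si vs).
- exact: (type2_move_to_intermediate demand_f cost_f Hv T2 si st vs).
Qed.
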